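(* Let $d\ge 2$ and for $\mathbf{p}\in(0,\infty)^d$ let $$G(\mathbf{p})=\min_{\mathbf{w}\in W_d}\frac{\prod_{i=1}^d p_i}{\big(\sum_{i=1}^d w_i^2p_i^2\big)^{d/2}}.$$ Then $\sup_{\mathbf{p}\in(0,\infty)^d}G(\mathbf{p})$ is attained, and there exists $\mathbf{p}^\star\in(0,\infty)^d$ such that every point of the one-dimensional vector half-space $P^\star=\{\kappa\mathbf{p}^\star:\kappa>0\}$ is a maximizer of $G$.
   Context: $W_d$ is the set of $d$ vectors $\mathbf{w}_k=(w_{k,1},\dots,w_{k,d})$, $k\in\{1,\dots,d\}$, given by $w_{k,i}=0$ for $i<k$, $w_{k,k}=k$, and $w_{k,i}=i-1$ for $k<i\le d$. *)

From HB Require Import structures.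
From mathcomp Require Import all_boot all_order all_algebra.
From mathcomp Require Import all_classical all_reals all_analysis.
Set Implicit Arguments. Unset Strict Implicit. Unset Printing Implicit Defensive.
Import Order.TTheory GRing.Theory Num.Theory.
Local Open Scope ring_scope.

(* The vectors w_k of W_d, 1-based in the paper; here k, i : 'I_d are 0-based,
   so paper index k = k+1, i = i+1:
   w_{k,i} = 0 if i < k, = k (paper) = k+1 (0-based) if i = k,
   = i - 1 (paper) = i (0-based) if i > k. *)
Definition wW (d : nat) (k i : 'I_d) : nat :=
  if (i < k)%N then 0%N else if i == k then k.+1 else (i : nat).

Definition Gratio (R : realType) (d : nat) (p : 'I_d -> R) (k : 'I_d) : R :=
  (\prod_(i < d) p i) /
  powR (\sum_(i < d) ((wW k i)%:R ^+ 2 * p i ^+ 2)) (d%:R / 2).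

(* The minimum over the finite
   (nonempty for d >= 1) index set is taken in the extended reals, whose
   top element +oo is the neutral element of the iterated min. *)
Definition G (R : realType) (d : nat) (p : 'I_d -> R) : \bar R :=
  \big[Order.min/+oo%E]_(k < d) (Gratio p k)%:E.

Definition posvec (R : realType) (d : nat) (p : 'I_d -> R) : Prop :=
  forall i, 0 < p i.

From HB Require Import structures.
From mathcomp Require Import all_boot all_order all_algebra.
From mathcomp Require Import all_classical all_reals all_analysis.
Import Order.TTheory GRing.Theory Num.Theory.
Import numFieldNormedType.Exports.
Local Open Scope ring_scope.
Local Open Scope classical_set_scope.
Set Implicit Arguments. Unset Strict Implicit.

(* Numerator and denominator of each ratio are homogeneous of degree d, so G
   is invariant under positive scaling and we may normalise the largest
   coordinate to 1.  On the compact box [δ, 1]^d the continuous function G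
   attains a maximum at some p*.  Off the box some coordinate is below δ;
   since w_1 has all entries >= 1 and some coordinate equals 1, the ratio
   for w_1 is then at most the product of the coordinates, hence below δ.
   Taking δ < G(1, ..., 1) makes p* a global maximizer, and so is every
   point of its ray. *)

Lemma EFin_bigmin_seed (R : realType) (I : Type) (s : seq I) (F : I -> R) (x : R) :
  (\big[Order.min/x]_(i <- s) F i)%:E =
  Order.min x%:E (\big[Order.min/+oo%E]_(i <- s) (F i)%:E).
Proof.
elim: s => [|i s IH]; first by rewrite !big_nil minEle leey.
by rewrite !big_cons EFin_min IH minCA.
Qed.

Lemma continuous_bigmin_seed (R : realType) (T : topologicalType) (I : Type)
    (s : seq I) (x : T -> R) (f : I -> T -> R) (v : T) :
  {for v, continuous x} -> (forall i, {for v, continuous (f i)}) ->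
  {for v, continuous (fun u => \big[Order.min/x u]_(i <- s) f i u)}.
Proof.
move=> cx cf; elim: s => [|i s IH].
  by rewrite (_ : (fun u => _) = x) //; apply/funext => u; rewrite big_nil.
rewrite (_ : (fun u => _) = f i \min (fun u => \big[Order.min/x u]_(j <- s) f j u)).
  exact: continuous_min.
by apply/funext => u; rewrite big_cons.
Qed.

Lemma prod_le_coord (R : numDomainType) (I : finType) (q : I -> R) (j : I) :
  (forall i, 0 <= q i <= 1) -> \prod_i q i <= q j.
Proof.
move=> q01; rewrite (bigD1 j) //=.
by apply: ler_piMr; [case/andP: (q01 j)|exact: prodr_ile1].
Qed.

Lemma exists_scale_max1 (R : realFieldType) (I : finType) (i0 : I) (q : I -> R) :
  (forall i, 0 < q i) ->
  exists (c : R) (j : I), [/\ 0 < c, c * q j = 1 & forall i, c * q i <= 1].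
Proof.
move=> qpos; case: (@arg_maxP _ R I i0 xpredT q isT) => j _ qmax.
exists (q j)^-1, j; split; first by rewrite invr_gt0.
  by rewrite mulVf // gt_eqF.
by move=> i; rewrite ler_pdivrMl // mulr1; exact: qmax.
Qed.

Lemma wW_gt0 d (k i : 'I_d) : (k <= i)%N -> (0 < wW k i)%N.
Proof.
move=> le_ki; rewrite /wW [(i < k)%N]ltnNge le_ki /=; case: eqP => // /eqP neq_ik.
have lt_ki : (k < i)%N by rewrite ltn_neqAle eq_sym neq_ik.
exact: leq_ltn_trans (leq0n k) lt_ki.
Qed.

Section Gratio.
Variables (R : realType) (d : nat).
Implicit Types (p : 'I_d -> R) (k : 'I_d).

Definition wsqnorm p k : R := \sum_(i < d) ((wW k i)%:R ^+ 2 * p i ^+ 2).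

Lemma GratioE p k : Gratio p k = (\prod_(i < d) p i) / wsqnorm p k `^ (d%:R / 2).
Proof. by []. Qed.

Lemma wsqnorm_gt0 p k : posvec p -> 0 < wsqnorm p k.
Proof.
move=> ppos; rewrite /wsqnorm (bigD1 k) //= ltr_pwDl //.
  by rewrite mulr_gt0 // exprn_gt0 // ?ltr0n ?wW_gt0.
by apply: sumr_ge0 => i _; rewrite mulr_ge0 // sqr_ge0.
Qed.

Lemma wsqnorm_ge1 p k (j : 'I_d) :
  posvec p -> (k <= j)%N -> p j = 1 -> 1 <= wsqnorm p k.
Proof.
move=> ppos le_kj pj1; rewrite /wsqnorm (bigD1 j) //= pj1 expr1n mulr1.
rewrite -[leLHS]addr0 lerD //; first by rewrite -natrX ler1n expn_gt0 wW_gt0.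
by apply: sumr_ge0 => i _; rewrite mulr_ge0 // sqr_ge0.
Qed.

Lemma wsqnormZ p k (c : R) :
  wsqnorm (fun i => c * p i) k = c ^+ 2 * wsqnorm p k.
Proof. by rewrite /wsqnorm mulr_sumr; apply: eq_bigr => i _; rewrite exprMn mulrCA. Qed.

Lemma Gratio_gt0 p k : posvec p -> 0 < Gratio p k.
Proof.
move=> ppos; rewrite GratioE divr_gt0 ?powR_gt0 ?wsqnorm_gt0 //.
by apply: prodr_gt0 => i _; exact: ppos.
Qed.

Lemma GratioZ p k (c : R) :
  0 < c -> posvec p -> Gratio (fun i => c * p i) k = Gratio p k.
Proof.
move=> c_gt0 ppos; rewrite !GratioE wsqnormZ.
rewrite powRM ?exprn_ge0 ?ltW ?wsqnorm_gt0 //.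
rewrite -(powR_mulrn 2 (ltW c_gt0)) -powRrM.
have -> : (2%:R * (d%:R / 2) : R) = d%:R by rewrite mulrCA mulfV ?mulr1.
rewrite powR_mulrn ?ltW // big_split /= prodr_const card_ord.
by rewrite invfM mulrACA mulfV ?mul1r // expf_neq0 // gt_eqF.
Qed.

Lemma Gratio_le_prod p k :
  posvec p -> 1 <= wsqnorm p k -> Gratio p k <= \prod_(i < d) p i.
Proof.
move=> ppos ge1; have pow_ge1 : 1 <= wsqnorm p k `^ (d%:R / 2).
  rewrite -[leLHS](powRr0 (wsqnorm p k)); exact: ler_powR.
rewrite GratioE ler_pdivrMr ?(lt_le_trans ltr01 pow_ge1) // ler_peMr //.
by apply: prodr_ge0 => i _; exact: ltW (ppos i).
Qed.

Lemma continuous_Gratio (v : 'rV[R]_d) k : posvec (v ord0) ->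
  {for v, continuous (fun u : 'rV[R]_d => Gratio (u ord0) k)}.
Proof.
move=> vpos.
have coord i : continuous (fun u : 'rV[R]_d => u ord0 i).
  exact: coord_continuous.
have cprod : continuous (fun u : 'rV[R]_d => \prod_(i < d) u ord0 i).
  exact: (@continuous_big R _ *%R 1 xpredT mul_continuous _ _ _ (fun i _ => coord i)).
have cterm i : continuous (fun u : 'rV[R]_d => (wW k i)%:R ^+ 2 * u ord0 i ^+ 2).
  move=> u; apply: (@continuousM R 'rV[R]_d); first exact: cst_continuous.
  exact: (@continuousM R 'rV[R]_d _ _ u (coord i u) (coord i u)).
have csum : continuous (fun u : 'rV[R]_d => wsqnorm (u ord0) k).
  exact: (@continuous_big R _ +%R 0 xpredT add_continuous _ _ _ (fun i _ => cterm i)).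
have cpow : {for wsqnorm (v ord0) k, continuous (fun a : R => a `^ (d%:R / 2))}.
  apply: differentiable_continuous; apply/derivable1_diffP.
  by apply: derivable_powR; rewrite in_itv /= wsqnorm_gt0.
apply: (@continuousM R 'rV[R]_d); first exact: cprod.
apply: (@continuousV R 'rV[R]_d); first by rewrite gt_eqF // powR_gt0 // wsqnorm_gt0.
exact: continuous_comp (csum v) cpow.
Qed.

End Gratio.

Lemma G_scale (R : realType) d (p : 'I_d -> R) (c : R) :
  0 < c -> posvec p -> G (fun i => c * p i) = G p.
Proof. by move=> c_gt0 ppos; apply: eq_bigr => k _; rewrite GratioZ. Qed.

Section Gmin.
Variables (R : realType) (n : nat).
Implicit Types (p q : 'I_n.+1 -> R).

(* Seeding the min with one of its own terms gives a real-valued G. *)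
Definition Gmin p : R := \big[Order.min/Gratio p ord0]_(k < n.+1) Gratio p k.

Lemma G_Gmin p : G p = (Gmin p)%:E.
Proof. by rewrite /G /Gmin EFin_bigmin_seed big_ord_recl minA minxx. Qed.

Lemma Gmin_le_Gratio p k : Gmin p <= Gratio p k.
Proof. exact: bigmin_le. Qed.

Lemma Gmin_gt0 p : posvec p -> 0 < Gmin p.
Proof.
move=> ppos; apply: (big_ind (fun x => 0 < x)); first exact: Gratio_gt0.
  by move=> x y x_gt0 y_gt0; rewrite lt_min x_gt0 y_gt0.
by move=> k _; exact: Gratio_gt0.
Qed.

Lemma Gmin_le_coord q (i j : 'I_n.+1) :
  posvec q -> (forall l, q l <= 1) -> q j = 1 -> Gmin q <= q i.
Proof.
move=> qpos q_le1 qj1; apply: le_trans (Gmin_le_Gratio q ord0) _.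
have ge1 : 1 <= wsqnorm q ord0 := wsqnorm_ge1 (k := ord0) qpos (leq0n j) qj1.
apply: le_trans (Gratio_le_prod qpos ge1) _.
by apply: prod_le_coord => l; rewrite ltW ?q_le1.
Qed.

Lemma continuous_Gmin (v : 'rV[R]_n.+1) : posvec (v ord0) ->
  {for v, continuous (fun u : 'rV[R]_n.+1 => Gmin (u ord0))}.
Proof.
by move=> vpos; apply: continuous_bigmin_seed => [|k]; apply: continuous_Gratio.
Qed.

Lemma Gmin_box_max (δ : R) : 0 < δ -> δ <= 1 ->
  exists2 p, posvec p &
    forall q, (forall i, δ <= q i <= 1) -> Gmin q <= Gmin p.
Proof.
move=> δ_gt0 δ_le1.
pose box := [set v : 'rV[R]_n.+1 | forall i, `[δ, 1] (v ord0 i)].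
have box_compact : compact box := rV_compact (fun=> @segment_compact R δ 1).
have box_pos v : box v -> posvec (v ord0).
  move=> vbox i; have := vbox i; rewrite /= in_itv /= => /andP[+ _].
  exact: lt_le_trans.
have box_ne0 : box !=set0.
  by exists (const_mx 1) => i; rewrite /= mxE in_itv /= δ_le1 lexx.
have Gmin_cont : {within box, continuous (fun v => Gmin (v ord0))}.
  by apply: continuous_in_subspaceT => v; rewrite inE => /box_pos/continuous_Gmin.
have [c cbox cmax] := compact_EVT_max box_ne0 box_compact Gmin_cont.
exists (c ord0); first by apply: box_pos; rewrite -inE.
move=> q qbox; have := cmax (\row_i q i); rewrite inE.
have -> : (\row_i q i) ord0 = q by apply/funext => i; rewrite mxE.
by apply => i; rewrite /= mxE in_itv /= qbox.
Qed.

Lemma G_attains_max :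
  exists2 p : 'I_n.+1 -> R, posvec p &
    forall q, posvec q -> (G q <= G p)%E.
Proof.
pose g1 := Gmin (fun=> 1).
have one_pos : posvec (fun _ : 'I_n.+1 => 1 : R) by move=> i; exact: ltr01.
have g1_gt0 : 0 < g1 := Gmin_gt0 one_pos.
have g1_le1 : g1 <= 1 := Gmin_le_coord ord0 (j := ord0) one_pos (fun=> lexx 1) erefl.
pose δ := g1 / 2.
have δ_gt0 : 0 < δ by rewrite divr_gt0.
have δ_lt_g1 : δ < g1 by rewrite ltr_pdivrMr // ltr_pMr // ltr1n.
have δ_le1 : δ <= 1 := ltW (lt_le_trans δ_lt_g1 g1_le1).
have [p ppos pmax] := Gmin_box_max δ_gt0 δ_le1.
have g1_le_p : g1 <= Gmin p by apply: pmax => i; rewrite δ_le1 lexx.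
exists p => // q qpos.
have [c [j [c_gt0 cqj1 cq_le1]]] := exists_scale_max1 ord0 qpos.
rewrite -(G_scale c_gt0 qpos) !G_Gmin lee_fin.
set q' := fun i => c * q i.
have q'pos : posvec q' by move=> i; rewrite mulr_gt0.
case: (boolP [forall i, δ <= q' i]) => [/forallP q'_ge|/forallPn[i]].
  by apply: pmax => i; rewrite q'_ge cq_le1.
rewrite -ltNge => q'i_lt.
apply/ltW/(le_lt_trans (Gmin_le_coord i q'pos cq_le1 cqj1)).
exact: lt_trans q'i_lt (lt_le_trans δ_lt_g1 g1_le_p).
Qed.

End Gmin.

Theorem lemma3 (R : realType) (d : nat) (hd : (2 <= d)%N) :
  (exists p : 'I_d -> R, posvec p /\
     forall q : 'I_d -> R, posvec q -> (G q <= G p)%E) /\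
  (exists pstar : 'I_d -> R, posvec pstar /\
     forall kappa : R, 0 < kappa ->
       forall q : 'I_d -> R, posvec q ->
         (G q <= G (fun i : 'I_d => (kappa * pstar i)%R))%E).
Proof.
case: d hd => [|n] // _.
have [p ppos pmax] := G_attains_max R n.
split; exists p; split => // kappa kappa_gt0 q qpos.
by rewrite G_scale //; exact: pmax.
Qed.
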